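(* Let $\lambda_1,\lambda_2\in P^+$ and set $a_\alpha=\min\{\lambda_1(h_\alpha),\lambda_2(h_\alpha)\}$ for $\alpha\in R^+$, $\mathbf a=(a_\alpha)$. Then the vectors $\prod_{\alpha\in R^+}(f_\alpha\otimes t)^{s_\alpha}.\mathbb 1$, for $\mathbf s=(s_\alpha)\in S(\mathbf a)$, span $M_{\lambda_1,\lambda_2}$, and hence their images span the subspace $U(\mathfrak n^-\otimes t).\mathbb 1\subset F_{\lambda_1,\lambda_2}$.
   Context: Let $\mathfrak{sl}_n=\mathfrak n^+\oplus\mathfrak h\oplus\mathfrak n^-$, $\mathfrak b=\mathfrak n^+\oplus\mathfrak h$, simple roots $\alpha_1,\dots,\alpha_{n-1}$, positive roots $R^+=\{\alpha_{k,\ell}=\alpha_k+\dots+\alpha_\ell:1\le k\le\ell\le n-1\}$, $P^+$ the dominant integral weights; for $\alpha\in R^+$ fix an $\mathfrak{sl}_2$-triple $e_\alpha,f_\alpha,h_\alpha$ with $f_\alpha\in\mathfrak g_{-\alpha}$. The current algebra $\mathfrak{sl}_n\otimes\mathbb C[t]$ has bracket $[x\otimes p,y\otimes q]=[x,y]\otimes pq$. Let $\mathbb C_{\lambda_1+\lambda_2}$ be the one-dimensional $\mathfrak b\otimes\mathbb C[t]$-module via $\mathfrak b\otimes\mathbb C[t]\to\mathfrak b\to\mathfrak h$ (evaluation at $t=0$, killing $\mathfrak n^+$) with $\mathfrak h$ acting by $\lambda_1+\lambda_2$; let $\mathfrak a=(\mathfrak b\otimes1)\oplus(\mathfrak{sl}_n\otimes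 t\mathbb C[t])$, and let $M_{\lambda_1,\lambda_2}$ be the quotient of $U(\mathfrak a)\otimes_{U(\mathfrak b\otimes\mathbb C[t])}\mathbb C_{\lambda_1+\lambda_2}$ by the submodule generated by $(\mathfrak n^-\otimes t^2\mathbb C[t])$ and by $(f_\alpha\otimes t)^{\min\{\lambda_1(h_\alpha),\lambda_2(h_\alpha)\}+1}$ ($\alpha\in R^+$) applied to the generator $\mathbb 1$. $F_{\lambda_1,\lambda_2}$ is the maximal $\mathfrak{sl}_n$-integrable quotient of $U(\mathfrak{sl}_n\otimes\mathbb C[t])\otimes_{U(\mathfrak a)}M_{\lambda_1,\lambda_2}$; equivalently, with $\lambda=\lambda_1+\lambda_2$, it is generated by $\mathbb 1$ subject to $(\mathfrak n^+\otimes\mathbb C[t]).\mathbb 1=0$, $(\mathfrak h\otimes t\mathbb C[t]).\mathbb 1=0$, $(\mathfrak n^-\otimes t^2\mathbb C[t]).\mathbb 1=0$, $(h\otimes1).\mathbb 1=\lambda(h)\mathbb 1$, $(f_\alpha\otimes1)^{\lambda(h_\alpha)+1}.\mathbb 1=0$, $(f_\alpha\otimes t)^{\min\{\lambda_1(h_\alpha),\lambda_2(h_\alpha)\}+1}.\mathbb 1=0$. A Dyck path is a sequence $\mathbf p=(\beta_1,\dots,\beta_s)$, $s\ge1$, of positive roots such that if $\beta_i=\alpha_{k,\ell}$ then $\beta_{i+1}\in\{\alpha_{k+1,\ell},\alpha_{k,\ell+1}\}$; if $\beta_1=\alpha_{k_1,\ell_1}$, $\beta_s=\alpha_{k_s,\ell_s}$,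 its base root is $\beta(\mathbf p)=\alpha_{k_1,\ell_s}$. $S(\mathbf a)$ is the set of $(x_\alpha)\in\mathbb Z_{\ge0}^{n(n-1)/2}$ with $\sum_{\alpha\in\mathbf p}x_\alpha\le a_{\beta(\mathbf p)}$ for every Dyck path $\mathbf p$. *)

From HB Require Import structures.
From mathcomp Require Import all_boot all_order all_algebra algC.
Set Implicit Arguments. Unset Strict Implicit. Unset Printing Implicit Defensive.
Import Order.TTheory GRing.Theory Num.Theory.
Local Open Scope ring_scope.

(* Conventions (0-indexed): the positive root alpha_{k,l} (1<=k<=l<=n-1)
   is encoded by the pair (i,j) = (k-1, l) of 'I_n with i < j, i.e.
   alpha = eps_i - eps_j.  e_alpha = E_{ij}, f_alpha = E_{ji},
   h_alpha = E_{ii} - E_{jj}. *)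

Definition posroot n (p : 'I_n * 'I_n) : bool := (p.1 < p.2)%N.

Definition posroots n : seq ('I_n * 'I_n) :=
  [seq p <- [seq (i, j) | i <- enum 'I_n, j <- enum 'I_n] | posroot p].

Definition froot n (p : 'I_n * 'I_n) : 'M[algC]_n := delta_mx p.2 p.1.

Definition sl_pred n : pred 'M[algC]_n := fun x => \tr x == 0.
Definition b_pred n : pred 'M[algC]_n := fun x =>
  [forall i : 'I_n, forall j : 'I_n, ((j < i)%N ==> (x i j == 0))] && (\tr x == 0).
Definition nplus_pred n : pred 'M[algC]_n := fun x =>
  [forall i : 'I_n, forall j : 'I_n, ((j <= i)%N ==> (x i j == 0))].
Definition nminus_pred n : pred 'M[algC]_n := fun x =>
  [forall i : 'I_n, forall j : 'I_n, ((i <= j)%N ==> (x i j == 0))].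
Definition h_pred n : pred 'M[algC]_n := fun x =>
  [forall i : 'I_n, forall j : 'I_n, ((i != j) ==> (x i j == 0))] && (\tr x == 0).

(* Weights: a weight is given by c : 'I_n -> int, lambda = sum_i c_i eps_i,
   so lambda(h) = sum_i c_i h_ii on the Cartan h (well defined on trace-zero
   diagonal matrices up to adding a constant to c).  lambda is dominant
   integral iff c is nonincreasing; then lambda(h_alpha) = c_i - c_j. *)
Definition dominant n (c : 'I_n -> int) : Prop :=
  forall i j : 'I_n, (i <= j)%N -> (c j <= c i)%R.

Definition wt_eval n (c : 'I_n -> int) (h : 'M[algC]_n) : algC :=
  \sum_i (c i)%:~R * h i i.

(* lambda(h_alpha) as a natural number (for dominant lambda) *)
Definition wt_h n (c : 'I_n -> int) (p : 'I_n * 'I_n) : nat := `|c p.1 - c p.2|%N.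

Definition wt_add n (c1 c2 : 'I_n -> int) : 'I_n -> int := fun i => c1 i + c2 i.

Definition amin n (c1 c2 : 'I_n -> int) (p : 'I_n * 'I_n) : nat :=
  minn (wt_h c1 p) (wt_h c2 p).

Definition dyck_step n (x y : 'I_n * 'I_n) : bool :=
  ((nat_of_ord y.1 == (x.1).+1) && (y.2 == x.2)) ||
  ((y.1 == x.1) && (nat_of_ord y.2 == (x.2).+1)).

Definition dyck n (p : seq ('I_n * 'I_n)) : bool :=
  match p with
  | [::] => false
  | x :: q => all (@posroot n) p && path (@dyck_step n) x q
  end.

Definition base_root n (x0 : 'I_n * 'I_n) (p : seq ('I_n * 'I_n)) : 'I_n * 'I_n :=
  ((head x0 p).1, (last x0 p).2).

(* s : 'I_n -> 'I_n -> nat; only the entries s i j with i < j matter. *)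
Definition in_S n (a : 'I_n * 'I_n -> nat) (s : 'I_n -> 'I_n -> nat) : Prop :=
  forall (p : seq ('I_n * 'I_n)) (x0 : 'I_n * 'I_n), dyck p ->
    (\sum_(x <- p) s x.1 x.2 <= a (base_root x0 p))%N.

(* Representations of a Lie subalgebra of sl_n (x) C[t] of the form
   \bigoplus_k D_k (x) t^k, given by rho k x = action of x (x) t^k. *)
Definition is_rep n (V : lmodType algC) (D : nat -> pred 'M[algC]_n)
    (rho : nat -> 'M[algC]_n -> V -> V) : Prop :=
  [/\ forall k x, D k x -> forall (a : algC) (w u : V),
         rho k x (a *: w + u) = a *: rho k x w + rho k x u,
      forall k x y, D k x -> D k y -> forall (a : algC) (w : V),
         rho k (a *: x + y) w = a *: rho k x w + rho k y w
    & forall k l x y, D k x -> D l y -> forall w : V,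
         rho k x (rho l y w) - rho l y (rho k x w) = rho (k + l)%N (x *m y - y *m x) w].

Inductive cyc n (V : lmodType algC) (A : nat -> pred 'M[algC]_n)
    (rho : nat -> 'M[algC]_n -> V -> V) (v : V) : V -> Prop :=
  | cyc_gen : cyc A rho v v
  | cyc_add w u : cyc A rho v w -> cyc A rho v u -> cyc A rho v (w + u)
  | cyc_scale (a : algC) w : cyc A rho v w -> cyc A rho v (a *: w)
  | cyc_act k x w : A k x -> cyc A rho v w -> cyc A rho v (rho k x w).

(* the algebra a = (b (x) 1) + (sl_n (x) t C[t]) *)
Definition a_dom n : nat -> pred 'M[algC]_n :=
  fun k => if k == 0%N then @b_pred n else @sl_pred n.
Definition cur_dom n : nat -> pred 'M[algC]_n := fun _ => @sl_pred n.
Definition nmt_dom n : nat -> pred 'M[algC]_n :=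
  fun k => if k == 1%N then @nminus_pred n else pred0.

Definition fvec n (V : lmodType algC) (rho : nat -> 'M[algC]_n -> V -> V)
    (s : 'I_n -> 'I_n -> nat) (v : V) : V :=
  foldr (fun p w => iter (s p.1 p.2) (rho 1%N (froot p)) w) v (posroots n).

Definition in_span_S n (V : lmodType algC) (rho : nat -> 'M[algC]_n -> V -> V)
    (a : 'I_n * 'I_n -> nat) (v w : V) : Prop :=
  exists (m : nat) (coef : 'I_m -> algC) (s : 'I_m -> 'I_n -> 'I_n -> nat),
    (forall i, in_S a (s i)) /\
    w = \sum_(i < m) coef i *: fvec rho (s i) v.

(* defining relations of the generator 1 of M_{lambda1,lambda2} *)
Definition M_rels n (c1 c2 : 'I_n -> int) (V : lmodType algC)
    (rho : nat -> 'M[algC]_n -> V -> V) (v : V) : Prop :=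
  [/\ forall x, nplus_pred x -> rho 0%N x v = 0,
      forall h, h_pred h -> rho 0%N h v = wt_eval (wt_add c1 c2) h *: v,
      forall k x, (1 <= k)%N -> b_pred x -> rho k x v = 0,
      forall k f, (2 <= k)%N -> nminus_pred f -> rho k f v = 0
    & forall p, posroot p -> iter (amin c1 c2 p).+1 (rho 1%N (froot p)) v = 0].

(* defining relations of the generator 1 of F_{lambda1,lambda2} *)
Definition F_rels n (c1 c2 : 'I_n -> int) (V : lmodType algC)
    (rho : nat -> 'M[algC]_n -> V -> V) (v : V) : Prop :=
  [/\ forall k x, nplus_pred x -> rho k x v = 0,
      forall k h, (1 <= k)%N -> h_pred h -> rho k h v = 0,
      forall k f, (2 <= k)%N -> nminus_pred f -> rho k f v = 0,
      forall h, h_pred h -> rho 0%N h v = wt_eval (wt_add c1 c2) h *: v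
    & (forall p, posroot p ->
         iter (wt_h (wt_add c1 c2) p).+1 (rho 0%N (froot p)) v = 0) /\
      (forall p, posroot p -> iter (amin c1 c2 p).+1 (rho 1%N (froot p)) v = 0)].

From Pilot Require Import Defs.
From HB Require Import structures.
From mathcomp Require Import all_boot all_order all_algebra algC.
From mathcomp Require Import zify.
From Stdlib Require Import Classical.
Set Implicit Arguments. Unset Strict Implicit. Unset Printing Implicit Defensive.
Import Order.TTheory GRing.Theory Num.Theory.
Local Open Scope ring_scope.

(* U(a).1 is spanned by the commuting monomials (f_{a_1} (x) t) ... (f_{a_m} (x) t) . 1:
   commuting b (x) t^k (k >= 1) or n^- (x) t^k (k >= 2) past an f_a (x) t raises the
   degree, so these operators kill every monomial, while b (x) 1 and sl_n (x) t map
   monomials to combinations of monomials.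
   A monomial whose exponents s lie outside S(a) is straightened: some Dyck path with
   base root alpha_{ij} carries N > a_{ij} of its letters. Applying operators e_{ic} (x) 1
   and e_{cj} (x) 1 to (f_{ij} (x) t)^N . 1 = 0 gives a relation, with all signs equal, in
   which the monomial occurs a positive number of times and every other term has the
   same row and column multisets. The letters on a Dyck path form a chain for the
   product order, so by a rearrangement inequality those other terms have a smaller
   weight sum_{(k,l)} k l; induction on the weight concludes. The relations of F imply
   those of M, which gives the statement for F. *)

(* fingraph exports a notation [froot] that would shadow the one of Defs. *)
Local Notation froot := Defs.froot.
Local Notation all_posroot := (all (@posroot _)).

Section TriangularParts.
Variable n : nat.
Implicit Types x y : 'M[algC]_n.

Lemma sl_pred0 : sl_pred (0 : 'M[algC]_n).
Proof. by rewrite /sl_pred mxtrace0. Qed.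

Lemma sl_predD x y : sl_pred x -> sl_pred y -> sl_pred (x + y).
Proof. by rewrite /sl_pred mxtraceD => /eqP -> /eqP ->; rewrite addr0. Qed.

Lemma sl_predZ (c : algC) x : sl_pred x -> sl_pred (c *: x).
Proof. by rewrite /sl_pred mxtraceZ => /eqP ->; rewrite mulr0. Qed.

Lemma sl_commutator x y : sl_pred (x *m y - y *m x).
Proof. by rewrite /sl_pred raddfB /= mxtrace_mulC subrr. Qed.

Lemma sl_delta_mx (i j : 'I_n) : i != j -> sl_pred (delta_mx i j : 'M[algC]_n).
Proof.
move=> nij; rewrite /sl_pred /mxtrace big1 // => k _; rewrite mxE.
by case: (k =P i) => [->|] //=; rewrite (negbTE nij).
Qed.

Lemma b_pred0 : b_pred (0 : 'M[algC]_n).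
Proof.
rewrite /b_pred mxtrace0 eqxx andbT; apply/forallP=> i; apply/forallP=> j.
by rewrite mxE eqxx implybT.
Qed.

Lemma b_predD x y : b_pred x -> b_pred y -> b_pred (x + y).
Proof.
move=> /andP[/forallP Hx tx] /andP[/forallP Hy ty].
apply/andP; split; last exact: sl_predD.
apply/forallP=> i; apply/forallP=> j; apply/implyP=> lt; rewrite mxE.
by move: (forallP (Hx i) j) (forallP (Hy i) j); rewrite lt => /eqP -> /eqP ->; rewrite addr0.
Qed.

Lemma b_sl x : b_pred x -> sl_pred x.
Proof. by case/andP. Qed.

Lemma nminus_sl x : nminus_pred x -> sl_pred x.
Proof.
move=> /forallP hx; rewrite /sl_pred /mxtrace big1 // => i _.
by move: (forallP (hx i) i); rewrite leqnn => /eqP.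
Qed.

Lemma nminus_mul_entry0 x y (i j k : 'I_n) :
  nminus_pred x -> nminus_pred y -> (i <= j)%N -> x i k * y k j = 0.
Proof.
move=> /forallP hx /forallP hy le; have [ki|ik] := ltnP k i.
  by move: (forallP (hy k) j); rewrite (leq_trans (ltnW ki) le) /= => /eqP ->; rewrite mulr0.
by move: (forallP (hx i) k); rewrite ik /= => /eqP ->; rewrite mul0r.
Qed.

Lemma nminus_commutator x y :
  nminus_pred x -> nminus_pred y -> nminus_pred (x *m y - y *m x).
Proof.
move=> hx hy; apply/forallP=> i; apply/forallP=> j; apply/implyP=> le.
by rewrite !mxE !big1 ?subrr // => k _; apply: nminus_mul_entry0.
Qed.

Definition lower_part x : 'M[algC]_n := \matrix_(i, j) (if (j < i)%N then x i j else 0).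
Definition upper_part x : 'M[algC]_n := \matrix_(i, j) (if (j < i)%N then 0 else x i j).
Definition strict_upper_part x : 'M[algC]_n :=
  \matrix_(i, j) (if (i < j)%N then x i j else 0).
Definition diag_part x : 'M[algC]_n := \matrix_(i, j) (if i == j then x i j else 0).

Lemma lower_upper_part x : x = lower_part x + upper_part x.
Proof. by apply/matrixP=> i j; rewrite !mxE; case: ifP; rewrite ?addr0 ?add0r. Qed.

Lemma nminus_lower_part x : nminus_pred (lower_part x).
Proof.
by apply/forallP=> i; apply/forallP=> j; apply/implyP=> le; rewrite mxE ltnNge le.
Qed.

Lemma sl_lower_part x : sl_pred (lower_part x).
Proof. exact/nminus_sl/nminus_lower_part. Qed.

Lemma b_upper_part x : sl_pred x -> b_pred (upper_part x).
Proof.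
move=> hx; apply/andP; split.
  by apply/forallP=> i; apply/forallP=> j; apply/implyP=> lt; rewrite mxE lt.
move: hx; rewrite /sl_pred {1}(lower_upper_part x) mxtraceD.
by move: (sl_lower_part x) => /eqP ->; rewrite add0r.
Qed.

Lemma lower_part_delta_sum x : lower_part x =
  \sum_(i < n) \sum_(j < n) (if (j < i)%N then x i j else 0) *: delta_mx i j.
Proof.
apply/matrixP=> i j; rewrite mxE summxE (bigD1 i) //= summxE (bigD1 j) //= big1.
  rewrite big1 ?addr0; first by rewrite !mxE !eqxx mulr1.
  move=> k nk; rewrite summxE big1 // => l _.
  by rewrite !mxE eq_sym (negbTE nk) mulr0.
by move=> l nl; rewrite !mxE eqxx eq_sym (negbTE nl) mulr0.
Qed.

Lemma sl_lower_term y (i j : 'I_n) :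
  sl_pred ((if (j < i)%N then y i j else 0) *: delta_mx i j).
Proof.
case: ifP => ji; last by rewrite scale0r; exact: sl_pred0.
by apply/sl_predZ/sl_delta_mx; rewrite neq_ltn ji orbT.
Qed.

Lemma b_strict_upper_diag_part x : b_pred x -> x = strict_upper_part x + diag_part x.
Proof.
case/andP=> /forallP hx _; apply/matrixP=> i j; rewrite !mxE -val_eqE /=.
case: (ltngtP i j) => [lij|lji|eij].
- by rewrite addr0.
- by move: (forallP (hx i) j); rewrite lji addr0 => /eqP.
- by rewrite add0r.
Qed.

Lemma nplus_strict_upper_part x : nplus_pred (strict_upper_part x).
Proof.
by apply/forallP=> i; apply/forallP=> j; apply/implyP=> le; rewrite mxE ltnNge le.
Qed.

Lemma b_strict_upper_part x : b_pred (strict_upper_part x).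
Proof.
apply/andP; split.
  apply/forallP=> i; apply/forallP=> j; apply/implyP=> lt.
  by rewrite mxE ltnNge (ltnW lt).
by rewrite /mxtrace big1 // => i _; rewrite mxE ltnn.
Qed.

Lemma mxtrace_diag_part x : \tr (diag_part x) = \tr x.
Proof. by apply: eq_bigr => i _; rewrite mxE eqxx. Qed.

Lemma h_diag_part x : sl_pred x -> h_pred (diag_part x).
Proof.
move=> hx; apply/andP; split; last by rewrite mxtrace_diag_part.
by apply/forallP=> i; apply/forallP=> j; apply/implyP=> nij; rewrite mxE (negbTE nij).
Qed.

Lemma b_diag_part x : sl_pred x -> b_pred (diag_part x).
Proof.
move=> hx; apply/andP; split; last by rewrite mxtrace_diag_part.
apply/forallP=> i; apply/forallP=> j; apply/implyP=> lt.
by rewrite mxE -val_eqE /= (gtn_eqF lt).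
Qed.

Lemma nminus_froot (g : 'I_n * 'I_n) : posroot g -> nminus_pred (froot g).
Proof.
move=> hg; apply/forallP=> i; apply/forallP=> j; apply/implyP=> le.
rewrite mxE; apply/eqP; case: (i =P g.2) => [ei|] /=; last by rewrite mulr0n.
case: (j =P g.1) => [ej|] /=; last by rewrite mulr0n.
by move: hg le; rewrite /posroot -ei -ej => /leq_trans h /h; rewrite ltnn.
Qed.

Definition eroot (g : 'I_n * 'I_n) : 'M[algC]_n := delta_mx g.1 g.2.

Lemma nplus_eroot g : posroot g -> nplus_pred (eroot g).
Proof.
move=> hg; apply/forallP=> i; apply/forallP=> j; apply/implyP=> le.
rewrite mxE; apply/eqP; case: (i =P g.1) => [ei|] /=; last by rewrite mulr0n.
case: (j =P g.2) => [ej|] /=; last by rewrite mulr0n.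
by move: hg le; rewrite /posroot -ei -ej => /leq_trans h /h; rewrite ltnn.
Qed.

Lemma b_eroot g : posroot g -> b_pred (eroot g).
Proof.
move=> hg; apply/andP; split.
  apply/forallP=> i; apply/forallP=> j; apply/implyP=> lt.
  rewrite mxE; apply/eqP; case: (i =P g.1) => [ei|] /=; last by rewrite mulr0n.
  case: (j =P g.2) => [ej|] /=; last by rewrite mulr0n.
  by move: hg lt; rewrite /posroot -ei -ej => /ltn_trans h /h; rewrite ltnn.
by apply: sl_delta_mx; rewrite neq_ltn; apply/orP; left; exact: hg.
Qed.

End TriangularParts.

Section MatrixUnits.
Variable n : nat.

Lemma lower_commutator_delta_entry (a b x y i j : 'I_n) :
  (if (j < i)%N
   then (delta_mx a b *m delta_mx y x - delta_mx y x *m delta_mx a b : 'M[algC]_n) i j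
   else 0) =
  ((b == y) && (x < a)%N && (i == a) && (j == x))%:R -
  ((a == x) && (b < y)%N && (i == y) && (j == b))%:R.
Proof.
rewrite !mul_delta_mx_cond (eq_sym a x).
have M1 : (delta_mx a x *+ (b == y) : 'M[algC]_n) i j = ((b == y) && ((i == a) && (j == x)))%:R.
  by case: (b == y); rewrite ?mulr1n ?mulr0n !mxE.
have M2 : (delta_mx y b *+ (x == a) : 'M[algC]_n) i j = ((x == a) && ((i == y) && (j == b)))%:R.
  by case: (x == a); rewrite ?mulr1n ?mulr0n !mxE.
case: ifP => ji.
  have E1 : ((i == a) && (j == x)) = ((x < a)%N && (i == a) && (j == x)).
    by case: (i =P a) => [ea|]; case: (j =P x) => [ex|]; rewrite ?andbF // -ea -ex ji.
  have E2 : ((i == y) && (j == b)) = ((b < y)%N && (i == y) && (j == b)).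
    by case: (i =P y) => [ey|]; case: (j =P b) => [eb|]; rewrite ?andbF // -ey -eb ji.
  by rewrite 2!mxE M1 M2 E1 E2 !andbA.
have H1 : ((b == y) && (x < a)%N && (i == a) && (j == x)) = false.
  case: (i =P a) => [ea|]; case: (j =P x) => [ex|]; rewrite ?andbF //.
  by rewrite -ea -ex ji andbF.
have H2 : ((x == a) && (b < y)%N && (i == y) && (j == b)) = false.
  case: (i =P y) => [ey|]; case: (j =P b) => [eb|]; rewrite ?andbF //.
  by rewrite -ey -eb ji andbF.
by rewrite H1 H2 subrr.
Qed.

Lemma sum_indicator1 (V : lmodType algC) (F : 'I_n -> V) a :
  \sum_i (if i == a then F i else 0) = F a.
Proof. by rewrite -big_mkcond big_pred1_eq. Qed.
Lemma sum_indicator2 (V : lmodType algC) (c : bool) (a x : 'I_n) (G : 'I_n -> 'I_n -> V) :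
  \sum_(i < n) \sum_(j < n) (c && (i == a) && (j == x))%:R *: G i j = if c then G a x else 0.
Proof.
case: c; last by rewrite big1 // => i _; rewrite big1 // => j _; rewrite /= scale0r.
rewrite -[RHS](@sum_indicator1 _ (fun i => G i x) a); apply: eq_bigr => i _ /=.
case: (i == a) => /=; last by rewrite big1 // => j _; rewrite scale0r.
rewrite -[RHS](@sum_indicator1 _ (fun j => G i j) x); apply: eq_bigr => j _ /=.
by case: (j == x); rewrite ?scale1r ?scale0r.
Qed.
End MatrixUnits.

Lemma count_mem_cat_cons (T : eqType) (u : T) (P Q : seq T) a :
  (count_mem u (P ++ a :: Q) = count_mem u (P ++ Q) + (a == u))%N.
Proof. by rewrite !count_cat /= addnCA addnC. Qed.

Lemma perm_eq_count_mem (T : eqType) (s1 s2 : seq T) :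
  (forall u, count_mem u s1 = count_mem u s2) -> perm_eq s1 s2.
Proof. by move=> h; rewrite /perm_eq; apply/allP=> x _; rewrite /= h. Qed.

Lemma perm_filter_flatten (T : eqType) (q L : seq T) : uniq q ->
  perm_eq [seq x <- L | x \in q] (flatten [seq nseq (count_mem g L) g | g <- q]).
Proof.
move=> uq; apply: perm_eq_count_mem => u.
rewrite count_filter.
have -> : count (predI (pred1 u) (mem q)) L = ((u \in q) * count_mem u L)%N.
  case: (boolP (u \in q)) => uq'.
    by rewrite mul1n; apply: eq_count => x /=; case: eqP => // ->; rewrite uq'.
  rewrite mul0n; apply/eqP; rewrite -leqn0 leqNgt -has_count.
  by apply/hasP => -[x _ /= /andP[/eqP -> ]]; rewrite (negbTE uq').
apply/esym; elim: q uq => [|g q IH] //= /andP[gq uq].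
rewrite count_cat IH // count_nseq inE /=.
case: (g =P u) => [eg|ng] /=.
  by rewrite -eg (negbTE gq) /= eqxx mul1n mul0n addn0.
rewrite mul0n add0n; case: (u =P g) => [e|_] //.
by case: ng; rewrite e.
Qed.

Lemma size_flatten_nseq (T : eqType) (q : seq T) (f : T -> nat) :
  size (flatten [seq nseq (f g) g | g <- q]) = (\sum_(g <- q) f g)%N.
Proof. by elim: q => [|g q IH] /=; rewrite ?big_nil // big_cons size_cat size_nseq IH. Qed.

Lemma mem_flatten_nseq (T : eqType) (q : seq T) (f : T -> nat) x :
  x \in flatten [seq nseq (f g) g | g <- q] -> x \in q.
Proof. by case/flattenP=> s /mapP[g gq ->] /nseqP[->]. Qed.

Lemma mem_posroots n (g : 'I_n * 'I_n) : (g \in posroots n) = posroot g.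
Proof.
rewrite /posroots mem_filter; case: (posroot g) => //=.
by case: g => x y; apply: allpairs_f; rewrite mem_enum.
Qed.

Lemma uniq_posroots n : uniq (posroots n).
Proof.
rewrite /posroots filter_uniq // allpairs_uniq ?enum_uniq //.
by move=> [x y] [x' y'] _ _ /= [-> ->].
Qed.

Section EAction.
Variable n : nat.
Implicit Types (g h : 'I_n * 'I_n) (L : seq ('I_n * 'I_n)) (c : 'I_n) (d : algC).

(* A word [L] of positive roots stands for the monomial
   [(f_{L_1} (x) t) ... (f_{L_m} (x) t) . 1]. [e_bracket ga g] is the strictly lower
   triangular part of [[e_ga, f_g]] as (coefficient, root) pairs, the rest of the bracket
   killing monomials; [e_act ga L] expands the action of [e_ga (x) 1] by the Leibniz rule. *)
Definition e_bracket (ga g : 'I_n * 'I_n) : seq (algC * ('I_n * 'I_n)) :=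
  (if (ga.2 == g.2) && (g.1 < ga.1)%N then [:: (1, (g.1, ga.1))] else [::]) ++
  (if (ga.1 == g.1) && (ga.2 < g.2)%N then [:: (-1, (ga.2, g.2))] else [::]).

Fixpoint e_act ga L : seq (algC * seq ('I_n * 'I_n)) :=
  match L with
  | [::] => [::]
  | g :: L' =>
    [seq (p.1, p.2 :: L') | p <- e_bracket ga g] ++ [seq (p.1, g :: p.2) | p <- e_act ga L']
  end.

Definition e_act_all ga (l : seq (algC * seq ('I_n * 'I_n))) :=
  flatten [seq [seq (p.1 * q.1, q.2) | q <- e_act ga p.2] | p <- l].

Definition e_acts_from (ops : seq ('I_n * 'I_n)) l := foldr e_act_all l ops.
Definition e_acts ops L := e_acts_from ops [:: (1, L)].

Lemma e_act_all_inv ga l d L' :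
  (d, L') \in e_act_all ga l ->
  exists p q, [/\ p \in l, q \in e_act ga p.2, d = p.1 * q.1 & L' = q.2].
Proof.
case/flattenP=> s /mapP[p pl ->] /mapP[q qD [-> ->]].
by exists p, q.
Qed.

Lemma mem_e_act_all ga l p q : p \in l -> q \in e_act ga p.2 -> (p.1 * q.1, q.2) \in e_act_all ga l.
Proof.
move=> pl qD; apply/flattenP; exists [seq (p.1 * q.1, q.2) | q <- e_act ga p.2].
  by apply/mapP; exists p.
by apply/mapP; exists q.
Qed.

Lemma e_acts_from_comp A l0 d1 L1 d2 L2 :
  (d1, L1) \in l0 -> (d2, L2) \in e_acts_from A [:: (1, L1)] ->
  (d1 * d2, L2) \in e_acts_from A l0.
Proof.
move=> h1; elim: A d2 L2 => [|ga A IH] d2 L2 /=.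
  by rewrite inE => /eqP [-> ->]; rewrite mulr1.
case/e_act_all_inv=> p [q [pD qD -> ->]].
have := IH p.1 p.2; rewrite -surjective_pairing => /(_ pD) hp.
by rewrite mulrA; apply: (mem_e_act_all hp qD).
Qed.

Lemma e_acts_cat A B L d1 L1 d2 L2 :
  (d1, L1) \in e_acts B L -> (d2, L2) \in e_acts A L1 ->
  (d1 * d2, L2) \in e_acts (A ++ B) L.
Proof. by rewrite /e_acts /e_acts_from foldr_cat; apply: e_acts_from_comp. Qed.

Lemma mem_e_act_at ga P g Q d g' : (d, g') \in e_bracket ga g ->
  (d, P ++ g' :: Q) \in e_act ga (P ++ g :: Q).
Proof.
elim: P => [|h P IH] /= ht.
  by rewrite mem_cat; apply/orP; left; apply/mapP; exists (d, g').
rewrite mem_cat; apply/orP; right; apply/mapP; exists (d, P ++ g' :: Q) => //.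
exact: IH.
Qed.

Lemma e_act_inv ga L d L' : (d, L') \in e_act ga L ->
  exists P g Q g', [/\ L = P ++ g :: Q, L' = P ++ g' :: Q & (d, g') \in e_bracket ga g].
Proof.
elim: L d L' => [|g L IH] d L' //=.
rewrite mem_cat => /orP[/mapP[[d' g'] ht [-> ->]]|/mapP[[d' M] hM [-> ->]]].
  by exists [::], g, L, g'.
have [P [h [Q [h' [eL eM ht]]]]] := IH _ _ hM.
by exists (g :: P), h, Q, h'; rewrite eL eM.
Qed.

Lemma e_acts1 ga L q : q \in e_act ga L -> (q.1, q.2) \in e_acts [:: ga] L.
Proof.
by move=> hq; have := @mem_e_act_all ga [:: (1, L)] (1, L) q; rewrite mem_head mul1r; apply.
Qed.

Lemma e_acts2 ga1 ga2 L q1 q2 : q1 \in e_act ga2 L -> q2 \in e_act ga1 q1.2 ->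
  (q1.1 * q2.1, q2.2) \in e_acts [:: ga1; ga2] L.
Proof.
move=> h1 h2; have := e_acts1 h1; rewrite /e_acts /e_acts_from /= => h.
exact: (@mem_e_act_all ga1 _ (q1.1, q1.2) q2 h h2).
Qed.

Lemma e_act_posroot ga L p : all_posroot L -> p \in e_act ga L -> all_posroot p.2.
Proof.
case: p => d L' hL /e_act_inv [P [g [Q [g' [eL -> ht]]]]].
move: hL; rewrite eL !all_cat /= => /and3P[-> _ ->]; rewrite andbT.
move: ht; rewrite /e_bracket mem_cat; case/orP.
  by case: ifP => // /andP[_ h]; rewrite inE => /eqP [_ ->].
by case: ifP => // /andP[_ h]; rewrite inE => /eqP [_ ->].
Qed.

Lemma e_acts_posroot ops L p : all_posroot L -> p \in e_acts ops L -> all_posroot p.2.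
Proof.
move=> hL; elim: ops p => [|ga ops IH] p /=; first by rewrite inE => /eqP ->.
case: p => d L' /e_act_all_inv [p [q [hp hq -> ->]]].
exact: (e_act_posroot (IH _ hp) hq).
Qed.

End EAction.

Section Rectangle.
Variables (n : nat) (i j : 'I_n).
Implicit Types (g t : 'I_n * 'I_n) (L T : seq ('I_n * 'I_n)) (c : 'I_n).

Definition in_rect g := [&& (i <= g.1)%N, (g.2 <= j)%N & (g.1 < g.2)%N].

(* The operation [(true, c)] stands for [e_{i c}] and [(false, c)] for [e_{c j}]. *)
Definition rect_op (o : bool * 'I_n) : 'I_n * 'I_n := if o.1 then (i, o.2) else (o.2, j).
Definition rect_op_ok (o : bool * 'I_n) := if o.1 then (i < o.2)%N else (o.2 < j)%N.

Lemma e_bracket_left c g (c' : algC) g' :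
  in_rect g -> (i < c)%N -> (c', g') \in e_bracket (i, c) g ->
  [/\ c' = -1, g = (i, g'.2), g' = (c, g.2) & in_rect g'].
Proof.
case: g => x y /and3P[/= ix yj xy] ic; rewrite /e_bracket /= mem_cat.
case/orP.
  case: ifP => // /andP[_ xi]; move: (leq_trans xi ix); rewrite ltnn //.
case: ifP => // /andP[/eqP ex cy]; rewrite inE => /eqP [-> ->] /=.
by split => //; [rewrite ex | rewrite /in_rect /= (ltnW ic) yj cy].
Qed.

Lemma e_bracket_right c g (c' : algC) g' :
  in_rect g -> (c < j)%N -> (c', g') \in e_bracket (c, j) g ->
  [/\ c' = 1, g = (g'.1, j), g' = (g.1, c) & in_rect g'].
Proof.
case: g => x y /and3P[/= ix yj xy] cj; rewrite /e_bracket /= mem_cat.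
case/orP; last first.
  case: ifP => // /andP[_ jy]; move: (leq_trans jy yj); rewrite ltnn //.
case: ifP => // /andP[/eqP ey xc]; rewrite inE => /eqP [-> ->] /=.
by split => //; [rewrite ey | rewrite /in_rect /= ix xc (ltnW cj)].
Qed.

Lemma e_act_left c L (c' : algC) L' : all in_rect L -> (i < c)%N -> (c', L') \in e_act (i, c) L ->
  [/\ c' = -1, all in_rect L', map snd L' = map snd L &
      forall u, (count_mem u (map fst L') + (i == u) = count_mem u (map fst L) + (c == u))%N].
Proof.
move=> hL ic /e_act_inv [P [g [Q [g' [eL eL' ht]]]]].
have hg : in_rect g by move: hL; rewrite eL all_cat /= => /and3P[].
have [-> eg eg' hg'] := e_bracket_left hg ic ht.
have e1 : g.1 = i by rewrite eg.
have e2 : g'.1 = c by rewrite eg'.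
have e3 : g'.2 = g.2 by rewrite eg'.
split => //.
- by move: hL; rewrite eL eL' !all_cat /= hg' => /and3P[-> _ ->] //.
- by rewrite eL eL' !map_cat /= e3.
- by move=> u; rewrite eL eL' !map_cat /= !count_mem_cat_cons e1 e2 addnAC.
Qed.

Lemma e_act_right c L (c' : algC) L' : all in_rect L -> (c < j)%N -> (c', L') \in e_act (c, j) L ->
  [/\ c' = 1, all in_rect L', map fst L' = map fst L &
      forall u, (count_mem u (map snd L') + (j == u) = count_mem u (map snd L) + (c == u))%N].
Proof.
move=> hL cj /e_act_inv [P [g [Q [g' [eL eL' ht]]]]].
have hg : in_rect g by move: hL; rewrite eL all_cat /= => /and3P[].
have [-> eg eg' hg'] := e_bracket_right hg cj ht.
have e1 : g.2 = j by rewrite eg.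
have e2 : g'.2 = c by rewrite eg'.
have e3 : g'.1 = g.1 by rewrite eg'.
split => //.
- by move: hL; rewrite eL eL' !all_cat /= hg' => /and3P[-> _ ->] //.
- by rewrite eL eL' !map_cat /= e3.
- by move=> u; rewrite eL eL' !map_cat /= !count_mem_cat_cons e1 e2 addnAC.
Qed.

Definition lefts (ops : seq (bool * 'I_n)) := [seq o.2 | o <- ops & o.1].
Definition rights (ops : seq (bool * 'I_n)) := [seq o.2 | o <- ops & ~~ o.1].

Lemma e_acts_rect_inv ops L0 d L' : all rect_op_ok ops -> all in_rect L0 ->
  (d, L') \in e_acts (map rect_op ops) L0 ->
  [/\ d = (-1) ^+ size (lefts ops), all in_rect L',
   forall u, (count_mem u (map fst L') + (i == u) * size (lefts ops) =
              count_mem u (map fst L0) + count_mem u (lefts ops))%N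
   & forall u, (count_mem u (map snd L') + (j == u) * size (rights ops) =
              count_mem u (map snd L0) + count_mem u (rights ops))%N].
Proof.
move=> hops hL0; elim: ops hops d L' => [|o ops IH] /=.
  move=> _ d L'; rewrite inE => /eqP [-> ->]; split => // u; by rewrite muln0 !addn0.
case/andP=> ho hops d L' /e_act_all_inv [p [q [hp hq -> ->]]].
case: p hp hq => pd pL /= hp hq.
have [e1 hin C1 C2] := IH hops pd pL hp.
case: o ho hq => [[] c] /= ho hq.
- case: q hq => qd qL /= hq.
  have [eq hin' E1 E2] := e_act_left hin ho hq.
  rewrite /lefts /rights /= -/(lefts ops) -/(rights ops).
  split => //.
  + by rewrite e1 eq exprS mulrC mulN1r.
  + move=> u; move: (C1 u) (E2 u); rewrite /=.
    by case: (i == u); case: (c == u) => /=; lia.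
  + by move=> u; rewrite E1; apply: C2.
- case: q hq => qd qL /= hq.
  have [eq hin' E1 E2] := e_act_right hin ho hq.
  rewrite /lefts /rights /= -/(lefts ops) -/(rights ops).
  split => //.
  + by rewrite e1 eq mulr1.
  + by move=> u; rewrite E1; apply: C1.
  + move=> u; move: (C2 u) (E2 u); rewrite /=.
    by case: (j == u); case: (c == u) => /=; lia.
Qed.

(* [rect_ops T] turns [(i, j)^|T|] into [T]; in whatever way the operations hit the
   letters, the outcome keeps the row and column multisets of [T]. *)
Definition rect_ops1 (t : 'I_n * 'I_n) : seq (bool * 'I_n) :=
  (if t.1 != i then [:: (true, t.1)] else [::]) ++ (if t.2 != j then [:: (false, t.2)] else [::]).
Definition rect_ops (T : seq ('I_n * 'I_n)) := flatten (map rect_ops1 T).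

Lemma rect_ops_ok T : all in_rect T -> all rect_op_ok (rect_ops T).
Proof.
elim: T => //= t T IH /andP[/and3P[it tj tt] hT]; rewrite all_cat IH // andbT.
rewrite /rect_ops1 all_cat; apply/andP; split.
  by case: ifP => //= ni; rewrite /rect_op_ok /= andbT ltn_neqAle eq_sym ni it.
by case: ifP => //= nj; rewrite /rect_op_ok /= andbT ltn_neqAle nj tj.
Qed.

Lemma lefts_cat A B : lefts (A ++ B) = lefts A ++ lefts B.
Proof. by rewrite /lefts filter_cat map_cat. Qed.
Lemma rights_cat A B : rights (A ++ B) = rights A ++ rights B.
Proof. by rewrite /rights filter_cat map_cat. Qed.
Lemma lefts_rect_ops1 t : lefts (rect_ops1 t) = if t.1 != i then [:: t.1] else [::].
Proof. by rewrite /rect_ops1 lefts_cat; case: ifP; case: ifP. Qed.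
Lemma rights_rect_ops1 t : rights (rect_ops1 t) = if t.2 != j then [:: t.2] else [::].
Proof. by rewrite /rect_ops1 rights_cat; case: ifP; case: ifP. Qed.

Lemma rect_ops_count T : all in_rect T ->
  (forall u, (count_mem u (map fst T) + (i == u) * size (lefts (rect_ops T)) =
     size T * (i == u) + count_mem u (lefts (rect_ops T)))%N) /\
  (forall u, (count_mem u (map snd T) + (j == u) * size (rights (rect_ops T)) =
     size T * (j == u) + count_mem u (rights (rect_ops T)))%N).
Proof.
elim: T => [|t T IH] /=; first by split => u; rewrite muln0.
case/andP=> _ /IH [C1 C2].
have -> : rect_ops (t :: T) = rect_ops1 t ++ rect_ops T by [].
rewrite lefts_cat rights_cat lefts_rect_ops1 rights_rect_ops1.
split=> u; rewrite size_cat count_cat.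
  move: (C1 u); case: (t.1 =P i) => [->|ni] /=.
    by case: (i == u) => /=; lia.
  by case: (i == u); case: (t.1 == u) => /=; lia.
move: (C2 u); case: (t.2 =P j) => [->|nj] /=.
  by case: (j == u) => /=; lia.
by case: (j == u); case: (t.2 == u) => /=; lia.
Qed.

Lemma e_acts_rect_outcome T d L' : (i < j)%N -> all in_rect T ->
  (d, L') \in e_acts (map rect_op (rect_ops T)) (nseq (size T) (i, j)) ->
  [/\ d = (-1) ^+ size (lefts (rect_ops T)), all in_rect L',
      perm_eq (map fst L') (map fst T) & perm_eq (map snd L') (map snd T)].
Proof.
move=> ij hT hD.
have hN : all in_rect (nseq (size T) (i, j)).
  by apply/allP=> g /nseqP [-> _]; rewrite /in_rect /= !leqnn ij.
have [e hin C1 C2] := e_acts_rect_inv (rect_ops_ok hT) hN hD.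
have [D1 D2] := rect_ops_count hT.
split => //; apply: perm_eq_count_mem => u.
  apply/eqP; rewrite -(eqn_add2r ((i == u) * size (lefts (rect_ops T)))) C1 D1.
  by rewrite map_nseq count_nseq /= mulnC.
apply/eqP; rewrite -(eqn_add2r ((j == u) * size (rights (rect_ops T)))) C2 D2.
by rewrite map_nseq count_nseq /= mulnC.
Qed.

Lemma e_acts_reach1 t P Q : in_rect t ->
  exists d, (d, P ++ t :: Q) \in e_acts (map rect_op (rect_ops1 t)) (P ++ (i, j) :: Q).
Proof.
case: t => [x y] /and3P[/= ix yj xy]; rewrite /rect_ops1 /=.
case: (x =P i) => [ex|nx]; case: (y =P j) => [ey|ny] /=.
- by exists 1; rewrite ex ey inE.
- exists (1 : algC); have := @e_acts1 _ (y, j) (P ++ (i, j) :: Q) (1, P ++ (x, y) :: Q); apply.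
  by apply: mem_e_act_at; rewrite /e_bracket /= eqxx -ex xy mem_cat inE eqxx.
- exists (-1 : algC); have := @e_acts1 _ (i, x) (P ++ (i, j) :: Q) (-1, P ++ (x, y) :: Q); apply.
  apply: mem_e_act_at; rewrite /e_bracket /= mem_cat; apply/orP; right.
  by rewrite eqxx -ey xy inE.
- exists (1 * -1 : algC).
  have := @e_acts2 _ (i, x) (y, j) (P ++ (i, j) :: Q) (1, P ++ (i, y) :: Q)
    (-1, P ++ (x, y) :: Q); apply.
    by apply: mem_e_act_at; rewrite /e_bracket /= eqxx (leq_ltn_trans ix xy) mem_cat inE eqxx.
  apply: mem_e_act_at; rewrite /e_bracket /= mem_cat; apply/orP; right.
  by rewrite eqxx xy inE.
Qed.

Lemma e_acts_reach T : all in_rect T ->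
  exists d, (d, T) \in e_acts (map rect_op (rect_ops T)) (nseq (size T) (i, j)).
Proof.
suff H : all in_rect T -> forall P,
    exists d, (d, P ++ T) \in e_acts (map rect_op (rect_ops T)) (P ++ nseq (size T) (i, j)).
  by move=> hT; apply: (H hT [::]).
elim: T => [|t T IH] /= hT P.
  by exists 1; rewrite /e_acts /= inE.
case/andP: hT => ht hT.
have [d1 h1] := IH hT (rcons P (i, j)).
have [d2 h2] := e_acts_reach1 P T ht.
exists (d1 * d2).
have -> : rect_ops (t :: T) = rect_ops1 t ++ rect_ops T by [].
rewrite map_cat.
move: h1; rewrite -cats1 -!catA /= => h1.
exact: e_acts_cat h1 h2.
Qed.

Lemma in_rect_posroot L : all in_rect L -> all_posroot L.
Proof. by apply: sub_all => g /and3P[]. Qed.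

End Rectangle.

Section Rearrangement.
Variable n : nat.
Implicit Types (g h mx : 'I_n * 'I_n) (L T : seq ('I_n * 'I_n)).

Definition weight L := (\sum_(g <- L) (g.1 * g.2))%N.
Definition le_pair g h := ((g.1 <= h.1) && (g.2 <= h.2))%N.
Definition pair_chain T := {in T &, forall x y, le_pair x y || le_pair y x}.

Lemma weight_cons g L : weight (g :: L) = (g.1 * g.2 + weight L)%N.
Proof. by rewrite /weight big_cons. Qed.

Lemma weight_cat L1 L2 : weight (L1 ++ L2) = (weight L1 + weight L2)%N.
Proof. by rewrite /weight big_cat. Qed.

Lemma weight_perm L1 L2 : perm_eq L1 L2 -> weight L1 = weight L2.
Proof. by move=> h; rewrite /weight (perm_big _ h). Qed.

Lemma le_pair_refl : reflexive le_pair.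
Proof. by move=> g; rewrite /le_pair !leqnn. Qed.

Lemma le_pair_trans : transitive le_pair.
Proof.
move=> b a c /andP[h1 h2] /andP[h3 h4].
by rewrite /le_pair (leq_trans h1 h3) (leq_trans h2 h4).
Qed.

Lemma pair_chain_sub T T' : {subset T' <= T} -> pair_chain T -> pair_chain T'.
Proof. by move=> s hc x y hx hy; apply: hc; apply: s. Qed.

Lemma pair_chain_max T :
  T != [::] -> pair_chain T -> exists2 m, m \in T & {in T, forall x, le_pair x m}.
Proof.
elim: T => // a [|b T] IH _ hc.
  by exists a; rewrite ?mem_head // => x; rewrite inE => /eqP ->; apply: le_pair_refl.
have hc' : pair_chain (b :: T).
  by apply: (pair_chain_sub _ hc) => x hx; rewrite inE hx orbT.
have [m hm mmax] := IH isT hc'.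
have /orP[h|h] : le_pair a m || le_pair m a by apply: hc; rewrite ?mem_head // inE hm orbT.
  exists m; first by rewrite inE hm orbT.
  by move=> x; rewrite inE => /orP[/eqP ->|hx] //; apply: mmax.
exists a; first exact: mem_head.
move=> x; rewrite inE => /orP[/eqP ->|hx]; first exact: le_pair_refl.
exact: le_pair_trans (mmax _ hx) h.
Qed.

(* If the maximum [mx] of the marginals is not itself a letter of [L], then two
   letters [e1 = (mx.1, _)] and [e2 = (_, mx.2)] of [L] can be replaced by
   [mx] and [(e2.1, e1.2)], which strictly increases the weight. *)
Lemma weight_swap_lt mx L T' : mx \notin L -> {in L, forall e, le_pair e mx} ->
  perm_eq (map fst L) (mx.1 :: map fst T') -> perm_eq (map snd L) (mx.2 :: map snd T') ->
  exists L1, [/\ perm_eq (map fst L1) (map fst T'), perm_eq (map snd L1) (map snd T')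
    & forall w, (weight L1 <= w)%N -> (weight L < mx.1 * mx.2 + w)%N].
Proof.
move=> mxL bound hf hs.
have /mapP[e1 e1L he1] : mx.1 \in map fst L by rewrite (perm_mem hf) mem_head.
have /mapP[e2 e2L he2] : mx.2 \in map snd L by rewrite (perm_mem hs) mem_head.
have lt1 : (e1.2 < mx.2)%N.
  have ne : e1.2 != mx.2.
    by apply: contraNneq _ mxL => e; have -> : mx = e1 by apply: injective_projections.
  by rewrite ltn_neqAle ne; case/andP: (bound e1 e1L).
have lt2 : (e2.1 < mx.1)%N.
  have ne : e2.1 != mx.1.
    by apply: contraNneq _ mxL => e; have -> : mx = e2 by apply: injective_projections.
  by rewrite ltn_neqAle ne; case/andP: (bound e2 e2L).
have ne12 : e2 != e1 by apply: contraTneq lt1 => <-; rewrite -he2 ltnn.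
set L2 := rem e2 (rem e1 L).
have pL : perm_eq L (e1 :: e2 :: L2).
  apply: (perm_trans (perm_to_rem e1L)); rewrite perm_cons.
  by apply: perm_to_rem; apply: rem_mem.
exists ((e2.1, e1.2) :: L2); split.
- rewrite -(perm_cons mx.1); apply: perm_trans hf.
  by rewrite perm_sym; apply: (perm_trans (perm_map fst pL)); rewrite /= -he1.
- rewrite -(perm_cons mx.2); apply: perm_trans hs.
  rewrite perm_sym; apply: (perm_trans (perm_map snd pL)).
  by rewrite /= -he2; apply/permP => P /=; rewrite addnCA.
move=> w; rewrite (weight_perm pL) !weight_cons /= -he1 -he2 => hw.
have swap : (mx.1 * e1.2 + e2.1 * mx.2 < e2.1 * e1.2 + mx.1 * mx.2)%N by nia.
rewrite addnA; apply: (leq_trans (n := e2.1 * e1.2 + mx.1 * mx.2 + weight L2)).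
  by rewrite ltn_add2r.
by rewrite addnAC addnC leq_add2l.
Qed.

Lemma rearrangement T L : pair_chain T ->
  perm_eq (map fst L) (map fst T) -> perm_eq (map snd L) (map snd T) ->
  perm_eq L T \/ (weight L < weight T)%N.
Proof.
move: {2}(size T) (erefl (size T)) => m; elim: m T L => [|m IH] T L.
  move/size0nil=> -> _ hf _; left.
  by move: (perm_size hf); rewrite size_map /= => /size0nil ->.
move=> hsz hc hf hs.
have T0 : T != [::] by apply: contra_eqN hsz => /eqP ->.
have [mx mxT mxmax] := pair_chain_max T0 hc.
set T' := rem mx T.
have pT : perm_eq T (mx :: T') by apply: perm_to_rem.
have hsz' : size T' = m by rewrite size_rem // hsz.
have hc' : pair_chain T' by apply: (pair_chain_sub (@mem_rem _ mx T) hc).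
have hf' : perm_eq (map fst L) (mx.1 :: map fst T') by apply: perm_trans hf (perm_map fst pT).
have hs' : perm_eq (map snd L) (mx.2 :: map snd T') by apply: perm_trans hs (perm_map snd pT).
have bound : {in L, forall e, le_pair e mx}.
  move=> e eL; have /mapP[t1 t1T e1] : e.1 \in map fst T by rewrite -(perm_mem hf) map_f.
  have /mapP[t2 t2T e2] : e.2 \in map snd T by rewrite -(perm_mem hs) map_f.
  by rewrite /le_pair e1 e2; case/andP: (mxmax t1 t1T) => -> _; case/andP: (mxmax t2 t2T).
have wT : weight T = (mx.1 * mx.2 + weight T')%N by rewrite (weight_perm pT) weight_cons.
have [mxL|mxL] := boolP (mx \in L); last first.
  right; have [L1 [hf1 hs1 lt]] := weight_swap_lt mxL bound hf' hs'.
  rewrite wT; apply: lt; case: (IH T' L1 hsz' hc' hf1 hs1) => [p|/ltnW //].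
  by rewrite (weight_perm p).
have pL : perm_eq L (mx :: rem mx L) by apply: perm_to_rem.
have hf1 : perm_eq (map fst (rem mx L)) (map fst T').
  by rewrite -(perm_cons mx.1); apply: perm_trans hf'; rewrite perm_sym (perm_map fst pL).
have hs1 : perm_eq (map snd (rem mx L)) (map snd T').
  by rewrite -(perm_cons mx.2); apply: perm_trans hs'; rewrite perm_sym (perm_map snd pL).
case: (IH T' _ hsz' hc' hf1 hs1) => [p|lt].
  left; apply: (perm_trans pL); rewrite perm_sym (perm_trans pT) //.
  by rewrite perm_cons perm_sym.
by right; rewrite (weight_perm pL) weight_cons wT ltn_add2l.
Qed.

End Rearrangement.

Section Dyck.
Variable n : nat.
Implicit Types (g h a b : 'I_n * 'I_n) (q : seq ('I_n * 'I_n)).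

Lemma dyck_step_le g h : dyck_step g h -> le_pair g h.
Proof.
rewrite /dyck_step /le_pair -!val_eqE /= => /orP[/andP[/eqP -> /eqP ->]|/andP[/eqP -> /eqP ->]].
  by rewrite leqnSn leqnn.
by rewrite leqnSn leqnn.
Qed.

Lemma dyck_step_lt g h : dyck_step g h -> (g.1 + g.2 < h.1 + h.2)%N.
Proof.
rewrite /dyck_step -!val_eqE /= => /orP[/andP[/eqP -> /eqP ->]|/andP[/eqP -> /eqP ->]].
  by rewrite addSn.
by rewrite addnS.
Qed.

Lemma dyck_path_le_head a q : path (@dyck_step n) a q -> {in q, forall g, le_pair a g}.
Proof.
elim: q a => // b q IH a /= /andP[ab pq] g; rewrite inE => /orP[/eqP ->|gq].
  exact: dyck_step_le.
exact: le_pair_trans (dyck_step_le ab) (IH _ pq _ gq).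
Qed.

Lemma dyck_path_le_last a q :
  path (@dyck_step n) a q -> {in a :: q, forall g, le_pair g (last a q)}.
Proof.
elim: q a => [|b q IH] a /=.
  by move=> _ g; rewrite inE => /eqP ->; rewrite /le_pair !leqnn.
case/andP=> ab pq g; rewrite inE => /orP[/eqP ->|gq]; last exact: IH.
exact: le_pair_trans (dyck_step_le ab) (IH _ pq _ (mem_head _ _)).
Qed.

Lemma dyck_path_chain a q : path (@dyck_step n) a q -> pair_chain (a :: q : seq ('I_n * 'I_n)).
Proof.
elim: q a => [|b q IH] a.
  by move=> _ x y; rewrite !inE => /eqP -> /eqP ->; rewrite /le_pair !leqnn.
move=> hp; have hp' := hp; case/andP: hp' => ab pq.
have la := dyck_path_le_head hp.
move=> x y; rewrite inE => /orP[/eqP ->|hx]; rewrite inE => /orP[/eqP ->|hy].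
- by rewrite /le_pair !leqnn.
- by rewrite la.
- by rewrite la ?orbT.
- exact: (IH _ pq _ _ hx hy).
Qed.

Lemma dyck_path_uniq a q : path (@dyck_step n) a q -> uniq (a :: q : seq ('I_n * 'I_n)).
Proof.
move=> hp; apply: (@sorted_uniq _ (fun x y : 'I_n * 'I_n => (x.1 + x.2 < y.1 + y.2)%N)).
- by move=> y x z; apply: ltn_trans.
- by move=> x; rewrite ltnn.
by apply: (sub_path _ hp) => x y; apply: dyck_step_lt.
Qed.

End Dyck.

Section RepLinear.
Variables (n : nat) (V : lmodType algC) (D : nat -> pred 'M[algC]_n).
Variable rho : nat -> 'M[algC]_n -> V -> V.
Hypotheses (HR : is_rep D rho) (D0 : forall k, D k 0).
Hypothesis DD : forall k x y, D k x -> D k y -> D k (x + y).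
Implicit Types (x y : 'M[algC]_n) (w u : V).

Lemma rhoD k x w u : D k x -> rho k x (w + u) = rho k x w + rho k x u.
Proof. by case: HR => H _ _ hx; rewrite -{1}(scale1r w) H // scale1r. Qed.

Lemma rho0 k x : D k x -> rho k x 0 = 0.
Proof. by move=> hx; apply: (addrI (rho k x 0)); rewrite -rhoD // !addr0. Qed.

Lemma rhoZ k x a w : D k x -> rho k x (a *: w) = a *: rho k x w.
Proof. by case: HR => H _ _ hx; rewrite -(addr0 (a *: w)) H // rho0 // addr0. Qed.

Lemma rho_sum k x (I : Type) (r : seq I) (P : pred I) (F : I -> V) : D k x ->
  rho k x (\sum_(i <- r | P i) F i) = \sum_(i <- r | P i) rho k x (F i).
Proof. by move=> hx; apply: (big_morph _ (fun a b => rhoD a b hx) (rho0 hx)). Qed.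

Lemma rho_mxD k x y w : D k x -> D k y -> rho k (x + y) w = rho k x w + rho k y w.
Proof. by case: HR => _ H _ hx hy; rewrite -{1}(scale1r x) H // scale1r. Qed.

Lemma rho_mx0 k w : rho k 0 w = 0.
Proof. by apply: (addrI (rho k 0 w)); rewrite -rho_mxD // !addr0. Qed.

Lemma rho_mxZ k x a w : D k x -> rho k (a *: x) w = a *: rho k x w.
Proof. by case: HR => _ H _ hx; rewrite -(addr0 (a *: x)) H // rho_mx0 addr0. Qed.

Lemma rho_mx_sum k (I : Type) (r : seq I) (F : I -> 'M[algC]_n) w :
  (forall i, D k (F i)) -> rho k (\sum_(i <- r) F i) w = \sum_(i <- r) rho k (F i) w.
Proof.
move=> hF; elim: r => [|a r IH]; first by rewrite !big_nil rho_mx0.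
rewrite !big_cons rho_mxD ?IH //.
by apply: (big_ind (D k)); [exact: D0 | exact: DD | move=> i _; exact: hF].
Qed.

Lemma rho_commutator k l x y w : D k x -> D l y ->
  rho k x (rho l y w) = rho l y (rho k x w) + rho (k + l)%N (x *m y - y *m x) w.
Proof. by case: HR => _ _ H hx hy; rewrite -H // addrC subrK. Qed.

End RepLinear.

Section ADomain.
Variable n : nat.
Implicit Types x y : 'M[algC]_n.
Local Notation D := (@a_dom n).

Lemma a_dom0 k : D k 0.
Proof. by rewrite /a_dom; case: (k == 0)%N; [exact: b_pred0 | exact: sl_pred0]. Qed.

Lemma a_domD k x y : D k x -> D k y -> D k (x + y).
Proof. by rewrite /a_dom; case: (k == 0)%N; [exact: b_predD | exact: sl_predD]. Qed.

Lemma a_dom_sl_pos k x : (0 < k)%N -> sl_pred x -> D k x.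
Proof. by rewrite /a_dom; case: k. Qed.

Lemma a_dom_b k x : b_pred x -> D k x.
Proof. by rewrite /a_dom; case: (k == 0)%N => // /b_sl. Qed.

Lemma a_dom_sl k x : D k x -> sl_pred x.
Proof. by rewrite /a_dom; case: (k == 0)%N => // /b_sl. Qed.

Lemma a_dom1_froot g : posroot g -> D 1 (froot g).
Proof. by move=> hg; apply: a_dom_sl_pos => //; apply/nminus_sl/nminus_froot. Qed.

Lemma a_dom0_eroot g : posroot g -> D 0 (eroot g).
Proof. by move=> hg; apply/a_dom_b/b_eroot. Qed.

End ADomain.

Section SpanS.
Variables (n : nat) (V : lmodType algC) (rho : nat -> 'M[algC]_n -> V -> V).
Variables (a : 'I_n * 'I_n -> nat) (v : V).
Local Notation spanS := (in_span_S rho a v).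

Lemma in_span_S0 : spanS 0.
Proof. by exists 0%N, (fun=> 0), (fun _ _ _ => 0%N); split; [case | rewrite big_ord0]. Qed.

Lemma in_span_S_fvec s : in_S a s -> spanS (fvec rho s v).
Proof. by move=> hs; exists 1%N, (fun=> 1), (fun=> s); rewrite big_ord1 scale1r. Qed.

Lemma in_span_SD w u : spanS w -> spanS u -> spanS (w + u).
Proof.
move=> [m1 [k1 [s1 [h1 ->]]]] [m2 [k2 [s2 [h2 ->]]]].
pose glue T (f1 : 'I_m1 -> T) (f2 : 'I_m2 -> T) (i : 'I_(m1 + m2)) :=
  match split i with inl i1 => f1 i1 | inr i2 => f2 i2 end.
exists (m1 + m2)%N, (glue _ k1 k2), (glue _ s1 s2); split.
  by move=> i; rewrite /glue; case: split.
rewrite big_split_ord /glue; congr (_ + _); apply: eq_bigr => i _.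
  by rewrite -[lshift _ _]/(unsplit (inl _ i)) unsplitK.
by rewrite -[rshift _ _]/(unsplit (inr _ i)) unsplitK.
Qed.

Lemma in_span_SZ c w : spanS w -> spanS (c *: w).
Proof.
move=> [m [k [s [h ->]]]]; exists m, (fun i => c * k i), s; split => //.
by rewrite scaler_sumr; apply: eq_bigr => i _; rewrite scalerA.
Qed.

Lemma in_span_S_sum (I : eqType) (r : seq I) (P : pred I) (F : I -> V) :
  (forall i, i \in r -> P i -> spanS (F i)) -> spanS (\sum_(i <- r | P i) F i).
Proof.
move=> hF; rewrite big_seq_cond; apply: (big_ind spanS).
- exact: in_span_S0.
- exact: in_span_SD.
- by move=> i /andP[]; apply: hF.
Qed.

End SpanS.

Section Monomials.
Variables (n : nat) (V : lmodType algC) (rho : nat -> 'M[algC]_n -> V -> V).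
Hypothesis HR : is_rep (@a_dom n) rho.
Variables (c1 c2 : 'I_n -> int) (v : V).
Hypothesis HM : M_rels c1 c2 rho v.

Local Notation D := (@a_dom n).
Implicit Types (g h : 'I_n * 'I_n) (L : seq ('I_n * 'I_n)) (x y : 'M[algC]_n).

Let rhoD := rhoD HR.
Let rho0 := rho0 HR.
Let rhoZ := rhoZ HR.
Let rho_sum := rho_sum HR.
Let rho_mxD := rho_mxD HR.
Let rho_mx0 := rho_mx0 HR (@a_dom0 n).
Let rho_mxZ := rho_mxZ HR (@a_dom0 n).
Let rho_mx_sum := rho_mx_sum HR (@a_dom0 n) (@a_domD n).
Let rho_commutator := rho_commutator HR.

Definition ft g (w : V) := rho 1%N (froot g) w.
Definition ftw L (w : V) := foldr ft w L.
Definition fmon L := ftw L v.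

Lemma ftD g w u : posroot g -> ft g (w + u) = ft g w + ft g u.
Proof. by move=> hg; apply/rhoD/a_dom1_froot. Qed.

Lemma ftZ g c w : posroot g -> ft g (c *: w) = c *: ft g w.
Proof. by move=> hg; apply/rhoZ/a_dom1_froot. Qed.

Lemma ft0 g : posroot g -> ft g 0 = 0.
Proof. by move=> hg; apply/rho0/a_dom1_froot. Qed.

Lemma ftwD L w u : all_posroot L -> ftw L (w + u) = ftw L w + ftw L u.
Proof. by elim: L => //= g L IH /andP[hg hL]; rewrite IH // ftD. Qed.

Lemma ftwZ L c w : all_posroot L -> ftw L (c *: w) = c *: ftw L w.
Proof. by elim: L => //= g L IH /andP[hg hL]; rewrite IH // ftZ. Qed.

Lemma ftw0 L : all_posroot L -> ftw L 0 = 0.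
Proof. by elim: L => //= g L IH /andP[hg hL]; rewrite IH // ft0. Qed.

Lemma ftw_sum L (I : Type) (r : seq I) (F : I -> V) : all_posroot L ->
  ftw L (\sum_(i <- r) F i) = \sum_(i <- r) ftw L (F i).
Proof. by move=> hL; apply: (big_morph _ (fun a b => ftwD a b hL) (ftw0 hL)). Qed.

Lemma fmon_cat A B : fmon (A ++ B) = ftw A (fmon B).
Proof. exact: foldr_cat. Qed.

Lemma fmon_nseq k g : fmon (nseq k g) = iter k (ft g) v.
Proof. by elim: k => //= k <-. Qed.

Lemma iter_ft0 k g : posroot g -> iter k (ft g) 0 = 0.
Proof. by move=> hg; elim: k => //= k ->; apply: ft0. Qed.

Lemma fvec_fmon s :
  fvec rho s v = fmon (flatten [seq nseq (s p.1 p.2) p | p <- posroots n]).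
Proof.
rewrite /fvec /fmon; elim: (posroots n) => //= p ps ->.
by rewrite /ftw foldr_cat; elim: (s p.1 p.2) => //= k ->.
Qed.

Lemma rho_lower_upper k y w : (0 < k)%N -> sl_pred y ->
  rho k y w = rho k (lower_part y) w + rho k (upper_part y) w.
Proof.
move=> hk hy; rewrite [in LHS](lower_upper_part y) rho_mxD //.
  exact: a_dom_sl_pos (sl_lower_part y).
exact/a_dom_b/b_upper_part.
Qed.

(* The degree >= 1 part of b and the degree >= 2 part of n^- kill every
   monomial: commuting them past an [f_g (x) t] raises the degree by one. *)
Lemma fmon_annihilated L : all_posroot L ->
  (forall k x, (1 <= k)%N -> b_pred x -> rho k x (fmon L) = 0) /\
  (forall k x, (2 <= k)%N -> nminus_pred x -> rho k x (fmon L) = 0).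
Proof.
case: HM => _ _ H3 H4 _.
elim: L => [|g L IH] /=; first by split=> k x hk hx; [exact: H3 | exact: H4].
case/andP=> hg /IH [IH1 IH2].
have step k x : (1 <= k)%N -> D k x -> rho k x (fmon L) = 0 ->
    rho k x (ft g (fmon L)) = 0.
  move=> hk hx h0; rewrite /ft rho_commutator ?a_dom1_froot // h0 rho0 ?a_dom1_froot // add0r.
  rewrite rho_lower_upper ?addn1 ?sl_commutator // (IH2 _ (lower_part _)) ?nminus_lower_part //.
  by rewrite add0r IH1 // b_upper_part // sl_commutator.
split=> k x hk hx.
  by apply: step => //; [apply: a_dom_b | exact: IH1].
apply: step; [exact: ltnW | | exact: IH2].
by apply: a_dom_sl_pos; [exact: ltnW | exact: nminus_sl].
Qed.

Lemma fmon_annihilated_sl L k y : all_posroot L -> (2 <= k)%N -> sl_pred y ->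
  rho k y (fmon L) = 0.
Proof.
move=> hL hk hy; have [K1 K2] := fmon_annihilated hL.
rewrite rho_lower_upper ?(ltnW hk) // (K2 _ (lower_part _)) ?nminus_lower_part //.
by rewrite add0r K1 ?(ltnW hk) ?b_upper_part.
Qed.

Lemma act1_fmon L y : all_posroot L -> sl_pred y -> rho 1 y (fmon L) =
  \sum_(i < n) \sum_(j < n) (if (j < i)%N then y i j else 0) *: fmon ((j, i) :: L).
Proof.
move=> hL hy; have [K1 _] := fmon_annihilated hL.
have Dterm (i j : 'I_n) : D 1 ((if (j < i)%N then y i j else 0) *: delta_mx i j).
  exact: a_dom_sl_pos (sl_lower_term y i j).
rewrite rho_lower_upper // (K1 _ (upper_part _)) ?b_upper_part // addr0.
rewrite lower_part_delta_sum rho_mx_sum.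
  apply: eq_bigr => i _; rewrite rho_mx_sum //; apply: eq_bigr => j _.
  case: ifP => ji; last by rewrite !scale0r rho_mx0.
  by rewrite rho_mxZ //; apply: a_dom_sl_pos => //; apply: sl_delta_mx; rewrite neq_ltn ji orbT.
by move=> i; apply: (big_ind (D 1)) => //; [exact: a_dom0 | exact: a_domD].
Qed.

Lemma ft_comm g h L : posroot g -> posroot h -> all_posroot L ->
  ft g (ft h (fmon L)) = ft h (ft g (fmon L)).
Proof.
move=> hg hh hL; rewrite /ft rho_commutator ?a_dom1_froot //.
have [_ K2] := fmon_annihilated hL.
by rewrite (K2 _ (_ *m _ - _ *m _)) ?addr0 //; apply: nminus_commutator; exact: nminus_froot.
Qed.

Lemma fmon_insert L1 g L2 : all_posroot (L1 ++ g :: L2) ->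
  fmon (L1 ++ g :: L2) = fmon (g :: L1 ++ L2).
Proof.
elim: L1 => [|h L1 IH] //= /andP[hh hL].
have hg : posroot g by move: hL; rewrite all_cat /= => /and3P[].
have hL' : all_posroot (L1 ++ L2) by move: hL; rewrite !all_cat /= => /and3P[-> _ ->].
by rewrite /fmon /= -/(fmon (L1 ++ g :: L2)) IH //= -/(fmon (L1 ++ L2)) ft_comm.
Qed.

Lemma fmon_perm L L' : perm_eq L L' -> all_posroot L -> fmon L = fmon L'.
Proof.
elim: L L' => [|g L IH] L'; first by rewrite perm_sym => /perm_nilP ->.
move=> hp hL; have gL' : g \in L' by rewrite -(perm_mem hp) mem_head.
case/splitPr: gL' hp => L1 L2 hp.
rewrite fmon_insert -?(perm_all _ hp) //; move: hL => /= /andP[hg hL].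
have hp' : perm_eq L (L1 ++ L2).
  by rewrite -(perm_cons g); apply: (perm_trans hp); rewrite -cat1s perm_catCA.
by rewrite /fmon /= -/(fmon L) -/(fmon (L1 ++ L2)) (IH _ hp').
Qed.

Definition mon_span (w : V) := exists l : seq (algC * seq ('I_n * 'I_n)),
  all (fun p => all_posroot p.2) l /\ w = \sum_(p <- l) p.1 *: fmon p.2.

Lemma mon_span0 : mon_span 0.
Proof. by exists [::]; rewrite big_nil. Qed.

Lemma mon_span_fmon L : all_posroot L -> mon_span (fmon L).
Proof. by move=> hL; exists [:: (1, L)]; rewrite /= hL big_seq1 scale1r. Qed.

Lemma mon_spanD w u : mon_span w -> mon_span u -> mon_span (w + u).
Proof.
by move=> [l1 [h1 ->]] [l2 [h2 ->]]; exists (l1 ++ l2); rewrite all_cat h1 h2 big_cat.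
Qed.

Lemma mon_spanZ c w : mon_span w -> mon_span (c *: w).
Proof.
move=> [l [h ->]]; exists [seq (c * p.1, p.2) | p <- l]; rewrite all_map; split=> //.
by rewrite big_map scaler_sumr; apply: eq_bigr => p _; rewrite scalerA.
Qed.

Lemma mon_span_sum (I : Type) (r : seq I) (F : I -> V) :
  (forall i, mon_span (F i)) -> mon_span (\sum_(i <- r) F i).
Proof. by move=> hF; apply: big_ind => //; [exact: mon_span0 | exact: mon_spanD]. Qed.

Lemma mon_span_linear (f : V -> V) w : mon_span w ->
  (forall c u u', f (c *: u + u') = c *: f u + f u') ->
  (forall L, all_posroot L -> mon_span (f (fmon L))) -> mon_span (f w).
Proof.
move=> [l [h ->]] hlin hm.
have f0 : f 0 = 0 by apply: (addrI (f 0)); move: (hlin 1 0 0); rewrite scaler0 !addr0 scale1r.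
elim: l h => [|p l IH] /=; first by rewrite big_nil f0 => _; exact: mon_span0.
case/andP=> hp hl; rewrite big_cons hlin; apply: mon_spanD; last exact: IH.
exact/mon_spanZ/hm.
Qed.

Lemma mon_span_ft g w : posroot g -> mon_span w -> mon_span (ft g w).
Proof.
move=> hg hw; apply: mon_span_linear => //.
  by move=> c u u'; rewrite ftD // ftZ.
by move=> L hL; apply: (@mon_span_fmon (g :: L)); rewrite /= hg.
Qed.

Lemma mon_span_act1 L y : all_posroot L -> sl_pred y -> mon_span (rho 1 y (fmon L)).
Proof.
move=> hL hy; rewrite act1_fmon //; apply: mon_span_sum => i; apply: mon_span_sum => j.
case: ifP => ji; last by rewrite scale0r; exact: mon_span0.
by apply/mon_spanZ/(@mon_span_fmon ((j, i) :: L)); rewrite /= hL andbT.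
Qed.

Lemma mon_span_act0_gen x : b_pred x -> mon_span (rho 0 x v).
Proof.
case: HM => H1 H2 _ _ _ hx.
rewrite (b_strict_upper_diag_part hx) rho_mxD; last 2 first.
- exact/a_dom_b/b_strict_upper_part.
- exact/a_dom_b/b_diag_part/b_sl.
rewrite H1 ?nplus_strict_upper_part // add0r H2 ?h_diag_part ?b_sl //.
exact/mon_spanZ/(@mon_span_fmon [::]).
Qed.

Lemma mon_span_act0 L x : all_posroot L -> b_pred x -> mon_span (rho 0 x (fmon L)).
Proof.
move=> hL hx; have Dx : D 0 x by apply: a_dom_b.
elim: L hL => [|g L IH] /=; first by move=> _; exact: mon_span_act0_gen.
case/andP=> hg hL; rewrite /fmon /= -/(fmon L) /ft rho_commutator ?a_dom1_froot //.
by apply: mon_spanD; [exact/mon_span_ft/IH | exact/mon_span_act1/sl_commutator].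
Qed.

Lemma cyc_mon_span w : cyc (@a_dom n) rho v w -> mon_span w.
Proof.
elim=> [|w1 u _ h1 _ h2|c w1 _ h1|k x w1 Dx _ h1].
- exact: (@mon_span_fmon [::]).
- exact: mon_spanD.
- exact: mon_spanZ.
apply: mon_span_linear => //.
  by move=> c u u'; case: HR => H _ _; rewrite H.
move=> L hL; case: k Dx => [|[|k]] Dx.
- exact: mon_span_act0.
- exact/mon_span_act1/(a_dom_sl Dx).
- by rewrite fmon_annihilated_sl ?(a_dom_sl Dx) //; exact: mon_span0.
Qed.

Lemma act_eroot_fmon ga L : posroot ga -> all_posroot L ->
  rho 0 (eroot ga) (fmon L) = \sum_(p <- e_act ga L) p.1 *: fmon p.2.
Proof.
case: HM => H1 _ _ _ _ hga; have De := a_dom0_eroot hga.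
elim: L => [|g L IH] /=; first by rewrite big_nil => _; exact: (H1 _ (nplus_eroot hga)).
case/andP=> hg hL; rewrite /fmon /= -/(fmon L) /ft.
rewrite (@rho_commutator 0 1 _ _ (fmon L) De (a_dom1_froot hg)) big_cat /= !big_map addrC.
congr (_ + _).
  rewrite IH // rho_sum ?a_dom1_froot //; apply: eq_bigr => p _.
  by rewrite rhoZ ?a_dom1_froot.
rewrite act1_fmon ?sl_commutator //.
rewrite (eq_bigr (fun i => \sum_(j < n)
    ((ga.2 == g.2) && (g.1 < ga.1)%N && (i == ga.1) && (j == g.1))%:R *: fmon ((j, i) :: L) -
    \sum_(j < n)
    ((ga.1 == g.1) && (ga.2 < g.2)%N && (i == g.2) && (j == ga.2))%:R *: fmon ((j, i) :: L)));
  last first.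
  move=> i _; rewrite -sumrB; apply: eq_bigr => j _.
  by rewrite /eroot /froot lower_commutator_delta_entry scalerBl.
rewrite sumrB !(@sum_indicator2 _ _ _ _ _ (fun i j => fmon ((j, i) :: L))).
rewrite /e_bracket big_cat /=.
case: ifP => _; case: ifP => _;
  by rewrite ?big_nil ?big_seq1 /= ?scale1r ?scaleN1r ?sub0r ?subr0 ?addr0 ?add0r ?oppr0.
Qed.

Definition e_ops (ops : seq ('I_n * 'I_n)) (w : V) :=
  foldr (fun ga w => rho 0 (eroot ga) w) w ops.

Lemma e_ops_fmon ops L : all_posroot ops -> all_posroot L ->
  e_ops ops (fmon L) = \sum_(p <- e_acts ops L) p.1 *: fmon p.2.
Proof.
move=> hops hL; elim: ops hops => [|ga ops IH] /=.
  by move=> _; rewrite /e_acts /= big_seq1 scale1r.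
case/andP=> hga hops; rewrite IH // rho_sum ?a_dom0_eroot //.
rewrite /e_acts /e_acts_from /= -/(e_acts_from ops [:: (1, L)]) -/(e_acts ops L).
rewrite /e_act_all big_flatten /= big_map big_seq [RHS]big_seq; apply: eq_bigr => p hp.
rewrite rhoZ ?a_dom0_eroot // act_eroot_fmon ?(e_acts_posroot hL hp) //.
by rewrite scaler_sumr big_map; apply: eq_bigr => q _; rewrite scalerA.
Qed.

Lemma e_ops0 ops : all_posroot ops -> e_ops ops 0 = 0.
Proof. by elim: ops => //= ga ops IH /andP[hga hops]; rewrite IH // rho0 ?a_dom0_eroot. Qed.

Local Notation spanS := (in_span_S rho (amin c1 c2) v).

(* Apply the [e]-operators [rect_ops T] to the relation [(f_{ij} (x) t)^N . v = 0],
   [N > a_{ij}]; all resulting monomials carry the same sign. *)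
Lemma rect_relation (i j : 'I_n) T rest : (i < j)%N -> all (in_rect i j) T ->
  (amin c1 c2 (i, j) < size T)%N -> all_posroot rest ->
  \sum_(p <- e_acts (map (rect_op i j) (rect_ops i j T)) (nseq (size T) (i, j)))
    fmon (rest ++ p.2) = 0.
Proof.
move=> ij hT hN hrest; case: HM => _ _ _ _ H5.
set Ds := e_acts _ _.
have hops : all_posroot (map (rect_op i j) (rect_ops i j T)).
  by rewrite all_map; apply: sub_all (rect_ops_ok hT) => -[[] c].
have hnseq : all_posroot (nseq (size T) (i, j)) by apply/allP=> g /nseqP [-> _].
have hz : fmon (nseq (size T) (i, j)) = 0.
  by rewrite fmon_nseq -(subnK hN) iterD H5 // iter_ft0.
have h0 : \sum_(p <- Ds) p.1 *: fmon (rest ++ p.2) = 0.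
  have := congr1 (ftw rest) (e_ops_fmon hops hnseq).
  rewrite hz e_ops0 // ftw0 // ftw_sum // => E; rewrite [RHS]E.
  by apply: eq_big_seq => p hp; rewrite ftwZ // fmon_cat.
set c0 : algC := (-1) ^+ size (lefts (rect_ops i j T)).
move: h0; rewrite (eq_big_seq (fun p => c0 *: fmon (rest ++ p.2))); last first.
  by case=> d L' /(e_acts_rect_outcome ij hT) [->].
by rewrite -scaler_sumr => /eqP; rewrite scaler_eq0 signr_eq0 => /eqP.
Qed.

Lemma straighten_rect (i j : 'I_n) T rest : (i < j)%N -> all (in_rect i j) T ->
  pair_chain T -> (amin c1 c2 (i, j) < size T)%N -> all_posroot rest ->
  (forall L, all_posroot L -> (weight L < weight (rest ++ T))%N -> spanS (fmon L)) ->
  spanS (fmon (rest ++ T)).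
Proof.
move=> ij hT hc hN hrest IH; have h1 := rect_relation ij hT hN hrest.
set Ds := e_acts _ _ in h1.
have hout p : p \in Ds -> [/\ all_posroot (rest ++ p.2),
    perm_eq (map fst p.2) (map fst T) & perm_eq (map snd p.2) (map snd T)].
  case: p => d L' /(e_acts_rect_outcome ij hT) [_ hr hf hs].
  by rewrite all_cat hrest (in_rect_posroot hr).
rewrite (bigID (fun p => perm_eq p.2 T)) /= in h1.
set k := count (fun p => perm_eq p.2 T) Ds.
have hpart : \sum_(p <- Ds | perm_eq p.2 T) fmon (rest ++ p.2) = fmon (rest ++ T) *+ k.
  rewrite big_seq_cond (eq_bigr (fun _ => fmon (rest ++ T))) => [|p /andP[hp pT]].
    by rewrite -big_seq_cond big_const_seq iter_addr_0.
  by case: (hout p hp) => hw _ _; apply: fmon_perm hw; rewrite perm_cat2l.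
have kpos : (0 < k)%N.
  by rewrite -has_count; apply/hasP; have [d hd] := e_acts_reach hT; exists (d, T).
have -> : fmon (rest ++ T) =
    (k%:R)^-1 *: ((-1) *: \sum_(p <- Ds | ~~ perm_eq p.2 T) fmon (rest ++ p.2)).
  move/eqP: h1; rewrite hpart addr_eq0 scaleN1r => /eqP <-.
  by rewrite -scaler_nat scalerA mulVf ?scale1r // pnatr_eq0 -lt0n.
apply/in_span_SZ/in_span_SZ/in_span_S_sum => p hp npT.
have [hw hf hs] := hout p hp; apply: IH hw _.
rewrite !weight_cat ltn_add2l.
by case: (rearrangement hc hf hs) => // pT; rewrite pT in npT.
Qed.

(* A Dyck path [pp] violating the defining inequality of [S(a)] at [L] yields a
   rectangle of roots below its base root holding more than [a] letters of [L]. *)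
Lemma straighten_dyck L pp g0 : all_posroot L -> dyck pp ->
  (amin c1 c2 (base_root g0 pp) < \sum_(g <- pp) count_mem g L)%N ->
  (forall L', all_posroot L' -> (weight L' < weight L)%N -> spanS (fmon L')) ->
  spanS (fmon L).
Proof.
case: pp => // b0 q hL /andP[hall hpath] hsum IH.
set pp := b0 :: q; set i := b0.1; set j := (last b0 q).2.
set T := flatten [seq nseq (count_mem g L) g | g <- pp].
set rest := [seq z <- L | z \notin pp].
have Tpp g : g \in T -> g \in pp by apply: mem_flatten_nseq.
have hhead g : g \in pp -> le_pair b0 g.
  by rewrite inE => /orP[/eqP ->|gq]; [exact: le_pair_refl | exact: dyck_path_le_head hpath _ gq].
have hlast g : g \in pp -> le_pair g (last b0 q) by exact: dyck_path_le_last hpath g.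
have hrect : all (in_rect i j) T.
  apply/allP=> g /Tpp gp; move: (hhead g gp) (hlast g gp) => /andP[h1 _] /andP[_ h2].
  by rewrite /in_rect h1 h2; move: (allP hall g gp).
have ij : (i < j)%N.
  move: (allP hall b0 (mem_head _ _)) (hlast b0 (mem_head _ _)) => h /andP[_ h2].
  exact: leq_trans h h2.
have pL : perm_eq L (rest ++ T).
  have /permPl <- : perm_eq ([seq z <- L | z \in pp] ++ rest) L by apply/permPl/perm_filterC.
  by rewrite perm_catC perm_cat2l; apply/perm_filter_flatten/(dyck_path_uniq hpath).
have hrest : all_posroot rest by rewrite all_filter; apply: sub_all hL => z hz; apply/implyP.
rewrite (fmon_perm pL hL); apply: (straighten_rect ij hrect) => //.
- by apply: (pair_chain_sub Tpp); apply: dyck_path_chain.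
- by rewrite size_flatten_nseq.
- by move=> L' hL' hw; apply: IH; rewrite // (weight_perm pL).
Qed.

Lemma fmon_in_span_S L : all_posroot L -> spanS (fmon L).
Proof.
move: {2}(weight L).+1 (ltnSn (weight L)) => m.
elim: m L => [|m IHm] L hw hL; first by rewrite ltn0 in hw.
pose s (x y : 'I_n) := count_mem (x, y) L.
have hs g : s g.1 g.2 = count_mem g L by case: g.
have [hS|hS] := classic (in_S (amin c1 c2) s).
  rewrite (_ : fmon L = fvec rho s v); first exact: in_span_S_fvec.
  rewrite fvec_fmon; apply: fmon_perm => //.
  rewrite (eq_map (g := fun p => nseq (count_mem p L) p)) => [|p]; last by rewrite hs.
  have hf : [seq z <- L | z \in posroots n] = L.
    by apply/all_filterP; apply: sub_all hL => z hz; rewrite mem_posroots.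
  by rewrite -{1}hf; apply/perm_filter_flatten/uniq_posroots.
have [pp hpp] := not_all_ex_not _ _ hS.
have [g0 hg0] := not_all_ex_not _ _ hpp.
have [hd hlt] := imply_to_and _ _ hg0.
apply: (straighten_dyck (g0 := g0) hL hd) => [|L' hL' hw']; last exact: IHm (leq_trans hw' hw) hL'.
rewrite ltnNge; apply/negP => h; apply: hlt.
by rewrite (eq_bigr _ (fun g _ => esym (hs g))) in h.
Qed.

Lemma cyc_in_span_S w : cyc (@a_dom n) rho v w -> spanS w.
Proof.
move=> /cyc_mon_span [l [hl ->]]; apply: in_span_S_sum => p hp _.
exact/in_span_SZ/fmon_in_span_S/(allP hl p hp).
Qed.

End Monomials.

Lemma is_rep_sub n (V : lmodType algC) (D D' : nat -> pred 'M[algC]_n)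
    (rho : nat -> 'M[algC]_n -> V -> V) :
  (forall k x, D' k x -> D k x) -> is_rep D rho -> is_rep D' rho.
Proof.
move=> sub [H1 H2 H3]; split=> [k x /sub|k x y /sub hx /sub|k l x y /sub hx /sub]; auto.
Qed.

Lemma cyc_sub n (V : lmodType algC) (A B : nat -> pred 'M[algC]_n)
    (rho : nat -> 'M[algC]_n -> V -> V) (v w : V) :
  (forall k x, A k x -> B k x) -> cyc A rho v w -> cyc B rho v w.
Proof.
move=> sub; elim=> [|w1 u _ h1 _ h2|c w1 _ h1|k x w1 Ax _ h1].
- exact: cyc_gen.
- exact: cyc_add.
- exact: cyc_scale.
- exact/cyc_act/h1/sub.
Qed.

Lemma nmt_dom_a_dom n k (x : 'M[algC]_n) : nmt_dom k x -> a_dom k x.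
Proof. by rewrite /nmt_dom; case: (k =P 1%N) => // -> /nminus_sl. Qed.

Lemma F_rels_M_rels n (c1 c2 : 'I_n -> int) (V : lmodType algC)
    (rho : nat -> 'M[algC]_n -> V -> V) (v : V) :
  is_rep (@a_dom n) rho -> F_rels c1 c2 rho v -> M_rels c1 c2 rho v.
Proof.
move=> HR [F1 F2 F3 F4 [_ F6]]; split=> [x|//|k x hk hx|//|//]; first exact: F1.
rewrite (b_strict_upper_diag_part hx) (rho_mxD HR); last 2 first.
- exact/a_dom_b/b_strict_upper_part.
- exact/a_dom_b/b_diag_part/b_sl.
by rewrite F1 ?nplus_strict_upper_part // F2 ?h_diag_part ?b_sl // addr0.
Qed.

Theorem corollary4p3 (n : nat) (hn : (1 < n)%N) (c1 c2 : 'I_n -> int)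
  (hc1 : dominant c1) (hc2 : dominant c2) :
  (* M_{lambda1,lambda2}: in every a-module generated-by-v quotient of the
     universal one, the vectors prod (f_alpha (x) t)^{s_alpha}.v, s in S(a),
     span U(a).v *)
  (forall (V : lmodType algC) (rho : nat -> 'M[algC]_n -> V -> V) (v : V),
     is_rep (@a_dom n) rho -> M_rels c1 c2 rho v ->
     forall w, cyc (@a_dom n) rho v w -> in_span_S rho (amin c1 c2) v w) /\
  (* F_{lambda1,lambda2}: they span U(n^- (x) t).v *)
  (forall (V : lmodType algC) (rho : nat -> 'M[algC]_n -> V -> V) (v : V),
     is_rep (@cur_dom n) rho -> F_rels c1 c2 rho v ->
     forall w, cyc (@nmt_dom n) rho v w -> in_span_S rho (amin c1 c2) v w).
Proof.
split=> [V rho v HR HM w|V rho v HR HF w hw]; first exact: cyc_in_span_S.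
have HRa : is_rep (@a_dom n) rho by apply: is_rep_sub HR => k x /a_dom_sl.
apply: (cyc_in_span_S HRa (F_rels_M_rels HRa HF)).
exact: cyc_sub (@nmt_dom_a_dom n) hw.
Qed.
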